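(* Let $\mathbb{F}$ be any field and $n$ a positive integer, and let $M\in\mathbb{F}^{2^n\times2^n}$ be either (i) $M=V_f$ for an arbitrary function $f:\{0,1\}^n\to\mathbb{F}$, or (ii) $M=M_1\otimes M_2\otimes\cdots\otimes M_n$ for arbitrary $M_1,\dots,M_n\in\mathbb{F}^{2\times2}$. Then for every integer $1\le k\le n$, $\mathcal{R}^{rc}_M\big(4\binom{n}{<k}\big)\le\binom{n-k}{\le n-2k}^2$ over $\mathbb{F}$.
   Context: $V_f[x,y]=f(x\vee y)$ for $x,y\in\{0,1\}^n$, with $\vee$ the bitwise OR. Row/column rigidity: $\mathcal{R}^{rc}_A(r)=\min\{\max(\mathrm{nnz_r}(B),\mathrm{nnz_c}(B)):\mathrm{rank}(A+B)\le r\}$, where $\mathrm{nnz_r}$, $\mathrm{nnz_c}$ are the maximum numbers of nonzero entries in a row, resp. column. $\binom{n}{<k}=\sum_{i=0}^{k-1}\binom{n}{i}$, $\binom{m}{\le j}=\sum_{i=0}^{j}\binom{m}{i}$ (empty sum $=0$). *)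

From Stdlib Require Import ClassicalDescription.
From mathcomp Require Import all_boot all_order all_algebra.
Set Implicit Arguments. Unset Strict Implicit. Unset Printing Implicit Defensive.
Import GRing.Theory.
Local Open Scope ring_scope.

(* Index i : 'I_(2^n) encodes x in {0,1}^n by its binary digits:
   coordinate t of x is bit t of i (t = 0 least significant). *)
Definition bitsOf (n : nat) (i : 'I_(2 ^ n)) : {ffun 'I_n -> bool} :=
  [ffun t : 'I_n => odd (i %/ 2 ^ t)].

Definition Vf (F : Type) (n : nat) (f : {ffun 'I_n -> bool} -> F) : 'M[F]_(2 ^ n) :=
  \matrix_(i, j) f [ffun t => bitsOf i t || bitsOf j t].

Definition bitI (b : bool) : 'I_2 := @Ordinal 2 (nat_of_bool b) (leq_b1 b).

(* Kronecker product M_0 (x) M_1 (x) ... (x) M_(n-1), standard convention: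
   factor M_t acts on binary digit n-1-t (M_0 on the most significant digit). *)
Definition kronProd (F : nzRingType) (n : nat) (Ms : 'I_n -> 'M[F]_2) : 'M[F]_(2 ^ n) :=
  \matrix_(i, j) \prod_(t < n)
     Ms t (bitI (odd (i %/ 2 ^ (n.-1 - t)))) (bitI (odd (j %/ 2 ^ (n.-1 - t)))).

Definition nnz_r (F : nzRingType) (m p : nat) (B : 'M[F]_(m, p)) : nat :=
  (\max_(i < m) #|[set j : 'I_p | B i j != 0%R]|)%N.
Definition nnz_c (F : nzRingType) (m p : nat) (B : 'M[F]_(m, p)) : nat :=
  (\max_(j < p) #|[set i : 'I_m | B i j != 0%R]|)%N.

Definition rigid_pred (F : fieldType) (m p : nat) (A : 'M[F]_(m, p)) (r s : nat) : Prop :=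
  exists B : 'M[F]_(m, p), (\rank ((A + B)%R) <= r)%N /\ (maxn (nnz_r B) (nnz_c B) <= s)%N.

Definition rigid_predb (F : fieldType) (m p : nat) (A : 'M[F]_(m, p)) (r s : nat) : bool :=
  if excluded_middle_informative (rigid_pred A r s) then true else false.

Lemma rigid_pred_ex (F : fieldType) (m p : nat) (A : 'M[F]_(m, p)) (r : nat) :
  exists s, rigid_predb A r s.
Proof.
exists (maxn (nnz_r (- A)) (nnz_c (- A))).
rewrite /rigid_predb; case: excluded_middle_informative => // H; exfalso; apply: H.
exists (- A); split; last by []. rewrite addrN mxrank0; exact: leq0n.
Qed.

(* row/column rigidity R^{rc}_A(r) = min { max(nnz_r B, nnz_c B) : rank(A+B) <= r } *)
Definition rc_rigidity (F : fieldType) (m p : nat) (A : 'M[F]_(m, p)) (r : nat) : nat :=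
  ex_minn (rigid_pred_ex A r).

Definition binom_lt (n k : nat) : nat := (\sum_(i < k) 'C(n, i))%N.
(* binom(m, <= j) = sum_{i=0}^{j} C(m,i), j an integer; empty sum (= 0) if j < 0 *)
Definition binom_le (m : nat) (j : int) : nat :=
  match j with Posz j' => (\sum_(i < j'.+1) 'C(m, i))%N | Negz _ => 0%N end.

From Stdlib Require Import ClassicalDescription.
From mathcomp Require Import all_boot all_order all_algebra zify ring.
Set Implicit Arguments. Unset Strict Implicit. Unset Printing Implicit Defensive.
Import GRing.Theory.

(* Both kinds of 2^n x 2^n matrices are sums, over S in {0,1}^n, of rank-one
   terms g_S h_S^T in which g_S vanishes on every row whose label X_i (a
   subset of [n]) meets S, and h_S on every column whose label Y_j meets S.
   For V_f this is Moebius inversion of f(x OR y) coordinatewise, the label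
   of x being its set of ones; for a Kronecker product, each 2x2 factor is a
   rank-one matrix plus a single entry, and the label of an index records the
   digits that miss the position of that entry.

   Any matrix with such a decomposition (structured_rigidity) is handled as
   follows: the terms with |S| < k have total rank < binom_lt n k; in the rest
   we erase the entries (i, j) with |X_i| >= k and |Y_j| >= k, which leaves
   a matrix supported on few rows plus few columns (rank <= 2 binom_lt n k).
   An erased entry is nonzero only if the complement of X_i :|: Y_j still
   has k points; counting such "spread" pairs of sets bounds the number of
   erased entries per row and per column by binom_le (n-k) (n-2k) ^ 2. *)

Lemma card_stat_lt (T : finType) (P : pred T) (f : T -> nat) k :
  #|[set x | P x && (f x < k)]| = \sum_(i < k) #|[set x | P x && (f x == i)]|.
Proof.
elim: k => [|k IH].
  by rewrite big_ord0; apply: eq_card0 => x; rewrite inE ltn0 andbF.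
have -> : [set x | P x && (f x < k.+1)] =
          [set x | P x && (f x < k)] :|: [set x | P x && (f x == k)].
  by apply/setP => x; rewrite !inE ltnS leq_eqVlt; case: (P x); case: ltngtP.
rewrite big_ord_recr /= -IH cardsU (_ : _ :&: _ = set0) ?cards0 ?subn0 //.
by apply/setP => x; rewrite !inE; case: (P x); case: ltngtP.
Qed.

Lemma card_small_subsets (T : finType) (D : {set T}) k :
  #|[set A : {set T} | (A \subset D) && (#|A| < k)]| = \sum_(i < k) 'C(#|D|, i).
Proof.
rewrite card_stat_lt; apply: eq_bigr => i _; rewrite -cards_draws.
by apply: eq_card => A; rewrite !inE.
Qed.

Lemma card_small_sets n k : #|[set X : {set 'I_n} | #|X| < k]| = binom_lt n k.
Proof.
rewrite /binom_lt; have := card_small_subsets [set: 'I_n] k.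
rewrite cardsT card_ord => <-.
by apply: eq_card => X; rewrite !inE subsetT.
Qed.

Lemma card_preimage_le (A B : finType) (f : A -> B) (P : pred B) :
  injective f -> #|[set a | P (f a)]| <= #|[set b | P b]|.
Proof.
move=> f_inj; rewrite -(card_imset _ f_inj); apply: subset_leq_card.
by apply/subsetP => b /imsetP [a]; rewrite !inE => Pa ->.
Qed.

Lemma card_small_labels (I : finType) n (lab : I -> {set 'I_n}) k :
  injective lab -> #|[set a | #|lab a| < k]| <= binom_lt n k.
Proof.
by move=> lab_inj; rewrite -card_small_sets (card_preimage_le (fun X : {set 'I_n} => #|X| < k)).
Qed.

(* (X, Y) is k-spread when X, Y and the complement of X :|: Y all have >= k points;
   these are the positions where the rigidity correction is nonzero. *)
Definition spread n k (X Y : {set 'I_n}) : bool :=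
  [&& k <= #|X|, k <= #|Y| & k <= #|~: (X :|: Y)|].

Lemma spreadC n k (X Y : {set 'I_n}) : spread k X Y = spread k Y X.
Proof. by rewrite /spread setUC andbCA. Qed.

Lemma spread_size n k (X Y : {set 'I_n}) : spread k X Y -> 2 * k <= n.
Proof.
case/and3P => kX _ kC; have := cardsC (X :|: Y); have := subset_leq_card (subsetUl X Y).
rewrite card_ord; lia.
Qed.

Lemma spread_near_core n k (X Y K : {set 'I_n}) :
  K \subset X -> #|K| = k -> spread k X Y ->
  (#|Y :\: K| <= n - 2 * k) && (#|K :\: Y| <= n - 2 * k).
Proof.
move=> sKX cK /and3P [_ kY kC].
have cU := cardsC (X :|: Y); rewrite card_ord in cU.
have KY_XY : #|K :|: Y| <= #|X :|: Y| by apply/subset_leq_card/setSU.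
have := cardsUI K Y; have := cardsID K Y; have := cardsID Y K; rewrite setIC.
lia.
Qed.

(* For any X, few Y form a k-spread pair with X: Y is determined by the two
   small sets Y :\: K and K :\: Y, where K is a fixed k-subset of X. *)
Lemma card_spread_partners n k (X : {set 'I_n}) :
  #|[set Y | spread k X Y]| <= binom_le (n - k) (n%:Z - (2 * k)%N%:Z) ^ 2.
Proof.
have [->|[Y0]] := set_0Vmem [set Y | spread k X Y]; first by rewrite cards0.
rewrite inE => spY0; have k2n := spread_size spY0; have /and3P [kX _ _] := spY0.
rewrite subzn //=; set m := n - 2 * k.
have /card_gt0P [K] : 0 < #|[set A : {set 'I_n} | A \subset X & #|A| == k]|.
  by rewrite cards_draws bin_gt0.
rewrite inE => /andP [sKX /eqP cK].
pose SA := [set A : {set 'I_n} | (A \subset ~: K) && (#|A| < m.+1)].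
pose SD := [set D : {set 'I_n} | (D \subset K) && (#|D| < m.+1)].
have split_inj : injective (fun Y : {set 'I_n} => (Y :\: K, K :\: Y)).
  move=> Y1 Y2 [/setP e1 /setP e2]; apply/setP => y.
  have := e1 y; have := e2 y; rewrite !inE.
  by case: (y \in K); case: (y \in Y1); case: (y \in Y2).
apply: (@leq_trans #|setX SA SD|).
  rewrite -(card_imset _ split_inj); apply/subset_leq_card/subsetP => p /imsetP [Y].
  rewrite inE => spY ->; have /andP [cYK cKY] := spread_near_core sKX cK spY.
  by rewrite !inE subsetDr subsetDl !ltnS cYK cKY.
rewrite cardsX -mulnn; apply: leq_mul.
  rewrite card_small_subsets (_ : #|~: K| = n - k) //.
  by have := cardsC K; rewrite card_ord cK; lia.
rewrite card_small_subsets cK; apply: leq_sum => i _; apply: leq_bin2l; lia.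
Qed.

Lemma rank_outer_le1 (F : fieldType) m p (a : 'I_m -> F) (b : 'I_p -> F) :
  \rank (\matrix_(i, j) (a i * b j) : 'M[F]_(m, p))%R <= 1.
Proof.
have -> : (\matrix_(i, j) (a i * b j) = (\col_i a i) *m (\row_j b j) :> 'M[F]_(m, p))%R.
  by apply/matrixP => i j; rewrite !mxE big_ord1 !mxE.
exact: leq_trans (mxrankM_maxl _ _) (rank_leq_col _).
Qed.

Lemma rank_sum_le (F : fieldType) m p (I : finType) (P : pred I) (A : I -> 'M[F]_(m, p)) :
  (forall i, P i -> \rank (A i) <= 1) -> \rank (\sum_(i | P i) A i)%R <= #|P|.
Proof.
move=> rankA1; rewrite -sum1_card.
elim/big_ind2: _ => // [|B1 r1 B2 r2 rB1 rB2]; first by rewrite mxrank0.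
exact: leq_trans (mxrank_add _ _) (leq_add rB1 rB2).
Qed.

Lemma rank_row_support (F : fieldType) m p (A : 'M[F]_(m, p)) (S : {set 'I_m}) :
  (forall i j, i \notin S -> A i j = 0%R) -> \rank A <= #|S|.
Proof.
move=> zero_rows.
have -> : (A = \sum_(i0 in S) \matrix_(i, j) ((i == i0)%:R * A i0 j))%R.
  apply/matrixP => i j; rewrite summxE.
  under eq_bigr do rewrite mxE mulr_natl mulrb.
  have [iS|iNS] := boolP (i \in S); last first.
    by rewrite zero_rows // big1 // => i0 i0S; case: eqP => // ii0; rewrite ii0 i0S in iNS.
  rewrite (bigD1 i) //= eqxx big1 ?addr0 // => i0 /andP [_ i0i].
  by rewrite eq_sym (negbTE i0i).
by apply: rank_sum_le => i0 _; apply: (rank_outer_le1 (fun i => (i == i0)%:R)%R).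
Qed.

Lemma rank_col_support (F : fieldType) m p (A : 'M[F]_(m, p)) (S : {set 'I_p}) :
  (forall i j, j \notin S -> A i j = 0%R) -> \rank A <= #|S|.
Proof.
by move=> zero_cols; rewrite -mxrank_tr; apply: rank_row_support => j i jNS; rewrite mxE zero_cols.
Qed.

Lemma rc_rigidity_le (F : fieldType) m p (A : 'M[F]_(m, p)) r s :
  rigid_pred A r s -> rc_rigidity A r <= s.
Proof.
move=> As; rewrite /rc_rigidity; case: ex_minnP => s0 _; apply.
by rewrite /rigid_predb; case: excluded_middle_informative.
Qed.

Lemma sparsity_le (F : nzRingType) m p (B : 'M[F]_(m, p)) s :
  (forall i, #|[set j | B i j != 0%R]| <= s) ->
  (forall j, #|[set i | B i j != 0%R]| <= s) ->
  maxn (nnz_r B) (nnz_c B) <= s.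
Proof. by move=> rows cols; rewrite geq_max; apply/andP; split; apply/bigmax_leqP. Qed.

Section StructuredRigidity.

Variables (F : fieldType) (n N : nat) (I : finType).
Variables (sigma : I -> {set 'I_n}) (X Y : 'I_N -> {set 'I_n}).
Variables (g h : I -> 'I_N -> F) (M : 'M[F]_N).
Hypotheses (sigma_inj : injective sigma) (X_inj : injective X) (Y_inj : injective Y).
Hypothesis M_sum : forall i j, M i j = (\sum_a g a i * h a j)%R.
Hypothesis g_supp : forall a i, g a i != 0%R -> [disjoint sigma a & X i].
Hypothesis h_supp : forall a j, h a j != 0%R -> [disjoint sigma a & Y j].
Variable k : nat.

Let term a : 'M[F]_N := (\matrix_(i, j) (g a i * h a j))%R.

Let low : 'M[F]_N := (\sum_(a | (#|sigma a| < k)%N) term a)%R.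
Let high : 'M[F]_N := (\sum_(a | ~~ (#|sigma a| < k)%N) term a)%R.

Lemma M_low_high : M = (low + high)%R.
Proof.
apply/matrixP => i j; rewrite M_sum !mxE !summxE (bigID (fun a => #|sigma a| < k)) /=.
by congr (_ + _)%R; apply: eq_bigr => a _; rewrite mxE.
Qed.

Lemma rank_low : \rank low <= binom_lt n k.
Proof.
apply: leq_trans (rank_sum_le _) _ => [a _|]; first exact: rank_outer_le1.
apply: leq_trans (card_small_labels k sigma_inj).
by apply: eq_leq; apply: eq_card => a; rewrite inE.
Qed.

(* Each term of high lives on rows and columns whose labels avoid its support. *)
Lemma high_support i j : high i j != 0%R -> k <= #|~: (X i :|: Y j)|.
Proof.
rewrite summxE; apply: contraNT; rewrite -ltnNge => few_free.
rewrite big1 // => a large; rewrite mxE.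
have [/eqP -> |gai] := boolP (g a i == 0%R); first by rewrite mul0r.
have [/eqP -> |haj] := boolP (h a j == 0%R); first by rewrite mulr0.
have : sigma a \subset ~: (X i :|: Y j).
  rewrite setCU subsetI -!disjoints_subset.
  by rewrite (g_supp gai) (h_supp haj).
by move/subset_leq_card => card_le; rewrite (leq_ltn_trans card_le few_free) in large.
Qed.

Let corr : 'M[F]_N :=
  (\matrix_(i, j) (if (k <= #|X i|)%N && (k <= #|Y j|)%N then - high i j else 0))%R.

Lemma corr_support i j : corr i j != 0%R -> spread k (X i) (Y j).
Proof.
rewrite mxE; case: ifP => [/andP [kX kY] | _]; last by rewrite eqxx.
by rewrite oppr_eq0 => /high_support kC; rewrite /spread kX kY kC.
Qed.

(* What is left of high is supported on few rows plus few columns. *)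
Lemma rank_high_corr : \rank (high + corr)%R <= binom_lt n k + binom_lt n k.
Proof.
pose rows := [set i | #|X i| < k]; pose cols := [set j | #|Y j| < k].
have -> : (high + corr = \matrix_(i, j) (if i \in rows then high i j else 0)
                      + \matrix_(i, j) (if (i \notin rows) && (j \in cols) then high i j else 0))%R.
  (* the entry of high is generalized so that rewriting stays out of its sum *)
  apply/matrixP => i j; rewrite 5!mxE; move: (high i j) => v.
  rewrite !inE; case: leqP => _; case: leqP => _;
    by rewrite /= ?addrN ?addr0 ?add0r.
rewrite {}/rows {}/cols; apply: leq_trans (mxrank_add _ _) (leq_add _ _).
  apply: leq_trans (card_small_labels k X_inj); apply: rank_row_support => i j iN.
  by rewrite mxE (negbTE iN).
apply: leq_trans (card_small_labels k Y_inj); apply: rank_col_support => i j jN.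
by rewrite mxE (negbTE jN) andbF.
Qed.

(* Each row/column of the correction meets few spread partners. *)
Lemma sparsity_corr : maxn (nnz_r corr) (nnz_c corr) <=
  binom_le (n - k) (n%:Z - (2 * k)%N%:Z) ^ 2.
Proof.
apply: sparsity_le => [i|j].
  apply: leq_trans (card_spread_partners k (X i)).
  apply: leq_trans (card_preimage_le (spread k (X i)) Y_inj).
  by apply/subset_leq_card/subsetP => j; rewrite !inE => /corr_support.
apply: leq_trans (card_spread_partners k (Y j)).
apply: leq_trans (card_preimage_le (spread k (Y j)) X_inj).
by apply/subset_leq_card/subsetP => i; rewrite !inE spreadC => /corr_support.
Qed.

(* A matrix with such a decomposition has small row/column rigidity; the
   construction even achieves rank 3 binom_lt n k. *)
Theorem structured_rigidity :
  rc_rigidity M (4 * binom_lt n k) <= binom_le (n - k) (n%:Z - (2 * k)%N%:Z) ^ 2.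
Proof.
apply: rc_rigidity_le; exists corr; split; last exact: sparsity_corr.
rewrite M_low_high -addrA; apply: leq_trans (mxrank_add _ _) _.
apply: leq_trans (leq_add rank_low rank_high_corr) _; lia.
Qed.

End StructuredRigidity.

Lemma bits_nat_inj n a b : a < 2 ^ n -> b < 2 ^ n ->
  (forall t, t < n -> odd (a %/ 2 ^ t) = odd (b %/ 2 ^ t)) -> a = b.
Proof.
elim: n a b => [|n IH] a b ha hb same_bits.
  by move: ha hb {same_bits}; rewrite expn0; case: a; case: b.
have low := same_bits 0 (ltn0Sn _); rewrite expn0 !divn1 in low.
have high : a %/ 2 = b %/ 2.
  apply: IH; rewrite ?ltn_divLR -?expnSr // => t lt_tn.
  by have := same_bits t.+1 lt_tn; rewrite expnS !divnMA.
by rewrite (divn_eq a 2) (divn_eq b 2) high !modn2 low.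
Qed.

Lemma bitsOf_inj n : injective (@bitsOf n).
Proof.
move=> i j eq_bits; apply/val_inj/(bits_nat_inj (ltn_ord i) (ltn_ord j)) => t lt_tn.
by have := congr1 (fun v : {ffun _ -> bool} => v (Ordinal lt_tn)) eq_bits; rewrite /= !ffunE.
Qed.

Lemma support_inj n : injective (fun S : {ffun 'I_n -> bool} => [set t | S t]).
Proof. by move=> S1 S2 /setP same; apply/ffunP => t; have := same t; rewrite !inE. Qed.

Lemma mismatch_inj (T : finType) n (bb : T -> {ffun 'I_n -> bool}) (e : 'I_n -> bool) :
  injective bb -> injective (fun x => [set t | bb x t != e t]).
Proof.
move=> bb_inj x1 x2 /setP same; apply/bb_inj/ffunP => t; have := same t; rewrite !inE.
by case: (bb x1 t); case: (bb x2 t); case: (e t).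
Qed.

Local Open Scope ring_scope.

Lemma prod_sum_bool (R : comNzRingType) n (G H : 'I_n -> bool -> R) :
  \prod_(t < n) \sum_(b : bool) G t b * H t b =
  \sum_(S : {ffun 'I_n -> bool}) (\prod_(t < n) G t (S t)) * \prod_(t < n) H t (S t).
Proof. by rewrite bigA_distr_bigA; apply: eq_bigr => S _; rewrite big_split. Qed.

Lemma prod_support (R : comNzRingType) n (G : 'I_n -> bool -> bool -> R)
    (e : 'I_n -> bool) (S x : {ffun 'I_n -> bool}) :
  (forall t y, G t true y != 0 -> y = e t) ->
  \prod_(t < n) G t (S t) (x t) != 0 -> [disjoint [set t | S t] & [set t | x t != e t]].
Proof.
move=> G_supp nz; rewrite -setI_eq0; apply/eqP/setP => t; rewrite !inE.
apply/andP => -[St xt]; have G0 : G t true (x t) = 0.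
  by apply/eqP; apply: contraTT xt => /G_supp ->; rewrite eqxx.
by move: nz; rewrite (bigD1 t) //= St G0 mul0r eqxx.
Qed.

Section VfDecomposition.

Variables (R : comNzRingType) (n : nat) (f : {ffun 'I_n -> bool} -> R).

Definition avoid (b x : bool) : R := if b && x then 0 else 1.

(* The Moebius coefficients of the point indicator of w. *)
Definition moebius (w b : bool) : R :=
  if b then (if w then -1 else 1) else (if w then 1 else 0).

Lemma avoid_supp y : avoid true y != 0 -> y = false.
Proof. by case: y => //=; rewrite eqxx. Qed.

Lemma or_indicator (x y w : bool) :
  ((x || y) == w)%:R = \sum_(b : bool) moebius w b * avoid b x * avoid b y.
Proof. by rewrite big_bool; case: w; case: x; case: y; rewrite /moebius /avoid /=; ring. Qed.

Lemma point_expand (z : {ffun 'I_n -> bool}) :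
  f z = \sum_w f w * \prod_(t < n) (z t == w t)%:R.
Proof.
rewrite (bigD1 z) //= big1 ?mulr1 => [|t _]; last by rewrite eqxx.
rewrite big1 ?addr0 // => w w_neq_z.
have /existsP [t zt_neq_wt] : [exists t, z t != w t].
  apply: contraTT w_neq_z; rewrite negb_exists negbK => /forallP eq_zw.
  by apply/eqP/ffunP => t; apply/esym/eqP/negPn/eq_zw.
by rewrite (bigD1 t) //= (negbTE zt_neq_wt) mul0r mulr0.
Qed.

Definition Vf_left (S : {ffun 'I_n -> bool}) (i : 'I_(2 ^ n)) : R :=
  (\sum_w f w * \prod_(t < n) moebius (w t) (S t)) * \prod_(t < n) avoid (S t) (bitsOf i t).

Definition Vf_right (S : {ffun 'I_n -> bool}) (j : 'I_(2 ^ n)) : R :=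
  \prod_(t < n) avoid (S t) (bitsOf j t).

Lemma Vf_decomposition i j : Vf f i j = \sum_S Vf_left S i * Vf_right S j.
Proof.
have expand (w : {ffun 'I_n -> bool}) :
    \prod_(t < n) ([ffun t => bitsOf i t || bitsOf j t] t == w t)%:R =
    \sum_(S : {ffun 'I_n -> bool})
      (\prod_(t < n) (moebius (w t) (S t) * avoid (S t) (bitsOf i t)))
      * \prod_(t < n) avoid (S t) (bitsOf j t).
  rewrite -(prod_sum_bool (fun t b => moebius (w t) b * avoid b (bitsOf i t))
                          (fun t b => avoid b (bitsOf j t))).
  by apply: eq_bigr => t _; rewrite ffunE or_indicator.
rewrite mxE point_expand; under eq_bigr do rewrite expand mulr_sumr.
rewrite exchange_big /=; apply: eq_bigr => S _.
rewrite /Vf_left /Vf_right !mulr_suml; apply: eq_bigr => w _.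
by rewrite big_split /= !mulrA.
Qed.

End VfDecomposition.

(* Every 2x2 matrix is a rank-one matrix plus a single entry in column 0:
   eliminate with the pivot at (1,1) if it is nonzero, otherwise take row 0. *)
Section TwoByTwo.

Variables (F : fieldType) (m : 'M[F]_2).

Let ent (x y : bool) : F := m (bitI x) (bitI y).

(* the row of the extra entry: 0 if the pivot m(1,1) is nonzero, else 1 *)
Definition mx2_pos : bool := ent true true == 0.

Definition mx2_row (x : bool) : F :=
  if ent true true != 0 then (if x then 1 else ent false true / ent true true)
  else (~~ x)%:R.

Definition mx2_col (y : bool) : F := ent (ent true true != 0) y.

Definition mx2_coef : F :=
  if ent true true != 0
  then ent false false - ent false true * ent true false / ent true true
  else ent true false.

Lemma mx2_split x y :
  m (bitI x) (bitI y) = mx2_row x * mx2_col y + mx2_coef * (x == mx2_pos)%:R * (~~ y)%:R.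
Proof.
rewrite /mx2_row /mx2_col /mx2_coef /mx2_pos -/(ent x y).
have [D0|D] := eqVneq (ent true true) 0.
  by case: x; case: y; rewrite /= ?D0 /=; ring.
by case: x; case: y; rewrite /= ?(negbTE D) /=; field.
Qed.

End TwoByTwo.

Section KronDecomposition.

Variables (F : fieldType) (n : nat) (Ms : 'I_n -> 'M[F]_2).

(* the binary digits of an index, in the order read by the factors M_0, ..., M_(n-1) *)
Definition kbits (i : 'I_(2 ^ n)) : {ffun 'I_n -> bool} := [ffun t => bitsOf i (rev_ord t)].

Lemma kbits_inj : injective kbits.
Proof.
move=> i j /ffunP same; apply: bitsOf_inj; apply/ffunP => t.
by have := same (rev_ord t); rewrite !ffunE rev_ordK.
Qed.

Lemma kbitsE i t : kbits i t = odd (i %/ 2 ^ (n.-1 - t)).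
Proof. by rewrite !ffunE /=; congr (odd (_ %/ 2 ^ _)); have := ltn_ord t; lia. Qed.

(* The factor t of a term: the rank-one part (b = false) or the extra entry (b = true). *)
Definition kron_lfactor t (b x : bool) : F :=
  if b then mx2_coef (Ms t) * (x == mx2_pos (Ms t))%:R else mx2_row (Ms t) x.

Definition kron_rfactor t (b y : bool) : F := if b then (~~ y)%:R else mx2_col (Ms t) y.

Lemma kron_lfactor_supp t x : kron_lfactor t true x != 0 -> x = mx2_pos (Ms t).
Proof. by rewrite /kron_lfactor /=; case: x; case: (mx2_pos (Ms t)); rewrite /= ?mulr0 ?eqxx. Qed.

Lemma kron_rfactor_supp t y : kron_rfactor t true y != 0 -> y = false.
Proof. by case: y => //=; rewrite eqxx. Qed.

Definition kron_left (S : {ffun 'I_n -> bool}) (i : 'I_(2 ^ n)) : F :=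
  \prod_(t < n) kron_lfactor t (S t) (kbits i t).

Definition kron_right (S : {ffun 'I_n -> bool}) (j : 'I_(2 ^ n)) : F :=
  \prod_(t < n) kron_rfactor t (S t) (kbits j t).

Lemma kron_decomposition i j : kronProd Ms i j = \sum_S kron_left S i * kron_right S j.
Proof.
rewrite mxE -(prod_sum_bool (fun t b => kron_lfactor t b (kbits i t))
                            (fun t b => kron_rfactor t b (kbits j t))).
by apply: eq_bigr => t _; rewrite big_bool /= addrC -mx2_split !kbitsE.
Qed.

End KronDecomposition.

(* V_f: rows and columns are labelled by their sets of ones. *)
Lemma Vf_rigidity (F : fieldType) n (f : {ffun 'I_n -> bool} -> F) k :
  (rc_rigidity (Vf f) (4 * binom_lt n k) <= binom_le (n - k) (n%:Z - (2 * k)%N%:Z) ^ 2)%N.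
Proof.
pose labels := mismatch_inj (e := fun=> false) (@bitsOf_inj n).
apply: (structured_rigidity (@support_inj n) labels labels (Vf_decomposition f)) => [S i|S j] nz.
  apply: (prod_support (G := fun=> avoid F) (fun=> @avoid_supp F)).
  by move: nz; apply: contra => /eqP prod0; rewrite /Vf_left prod0 mulr0.
exact: (prod_support (G := fun=> avoid F) (fun=> @avoid_supp F)).
Qed.

(* Kronecker products: rows are labelled by the digits missing the extra
   entries' rows, columns by their sets of ones. *)
Lemma kron_rigidity (F : fieldType) n (Ms : 'I_n -> 'M[F]_2) k :
  (rc_rigidity (kronProd Ms) (4 * binom_lt n k) <= binom_le (n - k) (n%:Z - (2 * k)%N%:Z) ^ 2)%N.
Proof.
apply: (structured_rigidity (@support_inj n)
          (mismatch_inj (e := fun t => mx2_pos (Ms t)) (@kbits_inj n))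
          (mismatch_inj (e := fun=> false) (@kbits_inj n)) (kron_decomposition Ms)) => [S i|S j].
  exact: (prod_support (G := kron_lfactor Ms) (@kron_lfactor_supp F n Ms)).
exact: (prod_support (G := kron_rfactor Ms) (@kron_rfactor_supp F n Ms)).
Qed.

Theorem mainTheorem13 (F : fieldType) (n : nat) (M : 'M[F]_(2 ^ n)) :
  (0 < n)%N ->
  ((exists f : {ffun 'I_n -> bool} -> F, M = Vf f) \/
   (exists Ms : 'I_n -> 'M[F]_2, M = kronProd Ms)) ->
  forall k : nat, (1 <= k <= n)%N ->
    (rc_rigidity M (4 * binom_lt n k) <=
       (binom_le (n - k) (n%:Z - (2 * k)%N%:Z)) ^ 2)%N.
Proof.
by move=> _ [[f ->] | [Ms ->]] k _; [exact: Vf_rigidity | exact: kron_rigidity].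
Qed.
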